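(* A hypergraph $H$ is quasi-eulerian if and only if it admits a decomposition into cycles, i.e., a family of cycles of $H$ such that every edge of $H$ is traversed by exactly one cycle of the family.
   Context: A hypergraph $H=(V,E)$ consists of a finite nonempty vertex set $V$, a finite edge set $E$ disjoint from $V$, and an incidence function assigning to each edge $e\in E$ a subset of $V$ (also denoted $e$); distinct edges may have the same vertex set. Hypergraphs are assumed to have no empty edges. A walk is a sequence $W=v_0e_1v_1e_2\cdots e_kv_k$ with $v_i\in V$, $e_i\in E$, such that for each $i$, $v_{i-1}\ne v_i$ and $v_{i-1},v_i\in e_i$; the $v_i$ are its anchors. $W$ is closed if $k\ge 2$ and $v_0=v_k$; it is a strict trail if $e_1,\dots,e_k$ are pairwise distinct. A cycle is a closed walk $v_0e_1v_1\cdots e_kv_0$ in which $v_0,\dots,v_{k-1}$ are pairwise distinct and $e_1,\dots,e_k$ are pairwise distinct. An Euler family of $H$ is a family of closed strict trails such that every edge of $H$ lies in exactly one trail and no two trails have a common anchor; $H$ is quasi-eulerian if it has one. *)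

From mathcomp Require Import all_boot.
Set Implicit Arguments. Unset Strict Implicit. Unset Printing Implicit Defensive.

(* A hypergraph is given by finite types V (vertices) and E (edges) together
   with an incidence function inc : E -> {set V}.  Distinct edges may have
   the same vertex set. *)

Section Hyper.
Variables (V E : finType) (inc : E -> {set V}).

(* A walk v0 e1 v1 ... ek vk is represented as (v0, [:: (e1,v1); ...; (ek,vk)]). *)
Definition walk := (V * seq (E * V))%type.

Fixpoint is_walk_from (v : V) (s : seq (E * V)) : bool :=
  match s with
  | [::] => true
  | (e, w) :: s' => [&& v != w, v \in inc e, w \in inc e & is_walk_from w s']
  end.

Definition is_walk (W : walk) : bool := is_walk_from W.1 W.2.

Definition wedges (W : walk) : seq E := map fst W.2.
Definition anchors (W : walk) : seq V := W.1 :: map snd W.2.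

Definition is_closed (W : walk) : bool :=
  [&& is_walk W, 2 <= size W.2 & last W.1 (map snd W.2) == W.1].

Definition is_strict_trail (W : walk) : bool := is_walk W && uniq (wedges W).

Definition is_closed_strict_trail (W : walk) : bool :=
  is_closed W && uniq (wedges W).

Definition is_cycle (W : walk) : bool :=
  [&& is_closed W, uniq (belast W.1 (map snd W.2)) & uniq (wedges W)].

Definition covers_exactly_once (F : seq walk) : Prop :=
  forall e : E, count (fun W => e \in wedges W) F = 1.

Definition euler_family (F : seq walk) : Prop :=
  [/\ all is_closed_strict_trail F,
      covers_exactly_once F &
      pairwise (fun W1 W2 => ~~ has (fun v => v \in anchors W2) (anchors W1)) F].

Definition quasi_eulerian : Prop := exists F : seq walk, euler_family F.

Definition cycle_decomposition (F : seq walk) : Prop :=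
  all is_cycle F /\ covers_exactly_once F.

End Hyper.

From mathcomp Require Import all_boot zify.
Set Implicit Arguments. Unset Strict Implicit. Unset Printing Implicit Defensive.

(* A closed walk is a cyclic sequence of steps (e_i, v_i), each step
   leaving the anchor of the previous one.  If a closed strict trail repeats
   an anchor, cutting the step sequence at the two occurrences and rotating
   yields two shorter closed strict trails sharing the edges of the original
   one; by induction every closed strict trail is an edge-disjoint union of
   cycles.  Conversely, two closed strict trails with a common anchor can be
   rotated to end at that anchor and concatenated into one closed strict
   trail; merging the cycles of a decomposition in this way until no two
   trails share an anchor gives an Euler family.  Both operations only permute
   the multiset of steps, so the edge covering is preserved. *)

Lemma not_uniq_map_split (S T : eqType) (f : S -> T) (s : seq S) :
  ~~ uniq (map f s) -> exists a p b q c, s = a ++ p :: b ++ q :: c /\ f p = f q.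
Proof.
elim: s => [//|p s IHs] /=; rewrite negb_and negbK => /orP[/mapP[q] | /IHs].
  by case/splitPr=> b c pq; exists [::], p, b, q, c.
by case=> a [p' [b [q [c [-> pq]]]]]; exists (p :: a), p', b, q, c.
Qed.

Section StepSequences.
Variables (V E : finType) (inc : E -> {set V}).

Definition step_rel (a b : E * V) : bool :=
  [&& a.2 != b.2, a.2 \in inc b.1 & b.2 \in inc b.1].

Definition closed_steps (s : seq (E * V)) : bool := cycle step_rel s && (s != [::]).

(* A closed walk starts at its last anchor; [v0] only matters for [s = [::]]. *)
Definition walk_of_steps (v0 : V) (s : seq (E * V)) : walk V E :=
  (last v0 (map snd s), s).

Lemma is_walk_fromE a s : is_walk_from inc a.2 s = path step_rel a s.
Proof. by elim: s a => [//|[e w] s IHs] a /=; rewrite -IHs /step_rel /= !andbA. Qed.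

Lemma path_step_rel_head a b s : a.2 = b.2 -> path step_rel a s = path step_rel b s.
Proof. by case: s => [//|c s] /= ab; rewrite /step_rel ab. Qed.

Lemma is_closed_walk_of_steps v0 s : is_closed inc (walk_of_steps v0 s) = closed_steps s.
Proof.
case: s => [|p s]; first by rewrite /is_closed /closed_steps.
rewrite /is_closed /closed_steps /walk_of_steps /is_walk /= eqxx andbT.
rewrite (last_map snd) -/(is_walk_from inc (last p s).2 (p :: s)) is_walk_fromE.
rewrite -[path step_rel p (rcons s p)]/(cycle step_rel (p :: s)) (cycle_path p) /=.
by case: s => [|q s] /=; rewrite ?andbT // /step_rel eqxx.
Qed.

Lemma closed_walkE v0 W : is_closed inc W -> W = walk_of_steps v0 W.2.
Proof.
case: W => v [|p s]; first by rewrite /is_closed.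
by case/and3P=> _ _ /eqP /= lastE; rewrite /walk_of_steps /= lastE.
Qed.

Lemma closed_walksE v0 F : all (is_closed inc) F ->
  F = map (walk_of_steps v0) (map snd F) /\ all closed_steps (map snd F).
Proof.
elim: F => [//|W F IHF] /= /andP[closedW /IHF[defF closedF]].
have stepsW : closed_steps W.2 by rewrite -(is_closed_walk_of_steps v0) -closed_walkE.
by rewrite -(closed_walkE v0 closedW) -defF closedF stepsW.
Qed.

Lemma mem_anchors_walk_of_steps v0 s x : s != [::] ->
  (x \in anchors (walk_of_steps v0 s)) = (x \in map snd s).
Proof.
case: s => [//|p s] _; rewrite /anchors /walk_of_steps /= in_cons.
by case: eqP => // ->; rewrite mem_last.
Qed.

Lemma is_cycle_walk_of_steps v0 s : is_cycle inc (walk_of_steps v0 s) =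
  [&& closed_steps s, uniq (map snd s) & uniq (map fst s)].
Proof.
rewrite /is_cycle is_closed_walk_of_steps; case: s => [//|p s] /=.
by rewrite -rcons_uniq -lastI.
Qed.

Lemma is_closed_strict_trail_walk_of_steps v0 s :
  is_closed_strict_trail inc (walk_of_steps v0 s) = closed_steps s && uniq (map fst s).
Proof. by rewrite /is_closed_strict_trail is_closed_walk_of_steps. Qed.

Lemma closed_steps_rcons u p : closed_steps (rcons u p) = cycle step_rel (rcons u p).
Proof. by rewrite /closed_steps andbC; case: u. Qed.

Lemma cycle_rcons_cat u1 p u2 q : p.2 = q.2 ->
  cycle step_rel (rcons u1 p ++ rcons u2 q) =
  cycle step_rel (rcons u1 p) && cycle step_rel (rcons u2 q).
Proof.
move=> pq; rewrite !(cycle_path p) last_cat !last_rcons cat_path last_rcons.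
by rewrite (path_step_rel_head (rcons u1 p) pq) (path_step_rel_head (rcons u2 q) pq).
Qed.

Lemma cycle_rot_to_last s p : cycle step_rel s -> p \in s ->
  exists u, perm_eq s (rcons u p) /\ cycle step_rel (rcons u p).
Proof.
move=> + s_p; case/splitPr: s_p => a b; rewrite -cat_rcons => cyc_s.
exists (b ++ a).
by rewrite rcons_cat -(rot_size_cat (rcons a p)) perm_sym perm_rot rot_cycle.
Qed.

(* Closing up the two arcs of a cycle cut at two steps with the same anchor. *)
Lemma closed_steps_split a p b q c : p.2 = q.2 ->
  closed_steps (a ++ p :: b ++ q :: c) ->
  [/\ perm_eq (a ++ p :: b ++ q :: c) (rcons b q ++ rcons (c ++ a) p),
      closed_steps (rcons b q) & closed_steps (rcons (c ++ a) p)].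
Proof.
move=> pq /andP[cyc_s _].
have rotE : rcons b q ++ rcons (c ++ a) p = rot (size (rcons a p)) (a ++ p :: b ++ q :: c).
  by rewrite -cat_rcons rot_size_cat -!cats1 -!catA.
move: cyc_s; rewrite -(rot_cycle (size (rcons a p))) -rotE cycle_rcons_cat ?pq //.
rewrite !closed_steps_rcons => /andP[-> ->].
by rewrite rotE perm_sym perm_rot.
Qed.

Lemma closed_steps_cycles s : closed_steps s ->
  exists C, [/\ all closed_steps C, all (fun t => uniq (map snd t)) C & perm_eq s (flatten C)].
Proof.
have [n] := ubnP (size s); elim: n s => // n IHn s /ltnSE size_s closed_s.
have [uniq_s | /not_uniq_map_split[a [p [b [q [c [defs pq]]]]]]] := boolP (uniq (map snd s)).
  by exists [:: s]; rewrite /= closed_s uniq_s cats0.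
rewrite {}defs in size_s closed_s *.
have [perm_s closed1 closed2] := closed_steps_split pq closed_s.
have [size1 size2] : size (rcons b q) < n /\ size (rcons (c ++ a) p) < n.
  by move: size_s; rewrite !size_rcons !size_cat /= size_cat /=; lia.
have [C1 [closedC1 uniqC1 permC1]] := IHn _ size1 closed1.
have [C2 [closedC2 uniqC2 permC2]] := IHn _ size2 closed2.
exists (C1 ++ C2); rewrite !all_cat closedC1 closedC2 uniqC1 uniqC2 flatten_cat.
by split=> //; rewrite (perm_trans perm_s) // perm_cat.
Qed.

Lemma closed_steps_all_cycles L : all closed_steps L ->
  exists C, [/\ all closed_steps C, all (fun t => uniq (map snd t)) C &
                perm_eq (flatten L) (flatten C)].
Proof.
elim: L => [|s L IHL] /=; first by exists [::].
case/andP=> /closed_steps_cycles[C1 [closedC1 uniqC1 permC1]].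
move=> /IHL[C2 [closedC2 uniqC2 permC2]].
exists (C1 ++ C2); rewrite !all_cat closedC1 closedC2 uniqC1 uniqC2 flatten_cat.
by split=> //; apply: perm_cat.
Qed.

Definition anchors_disjoint (s t : seq (E * V)) : bool :=
  all (fun v => v \notin map snd t) (map snd s).

Lemma anchors_disjoint_cat s t1 t2 :
  anchors_disjoint s (t1 ++ t2) = anchors_disjoint s t1 && anchors_disjoint s t2.
Proof.
rewrite /anchors_disjoint -all_predI; apply: eq_all => v.
by rewrite /= map_cat mem_cat negb_or.
Qed.

Lemma anchors_disjoint_flatten s L :
  anchors_disjoint s (flatten L) = all (anchors_disjoint s) L.
Proof.
elim: L => [|t L IHL] /=; last by rewrite anchors_disjoint_cat IHL.
by apply/allP.
Qed.

Lemma anchors_disjoint_perm s t1 t2 :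
  perm_eq t1 t2 -> anchors_disjoint s t1 = anchors_disjoint s t2.
Proof. by move=> perm_t; apply: eq_all => v; rewrite /= (perm_mem (perm_map snd perm_t)). Qed.

Lemma merge_closed_steps s t : closed_steps s -> closed_steps t ->
  ~~ anchors_disjoint t s -> exists m, closed_steps m /\ perm_eq (s ++ t) m.
Proof.
move=> /andP[cyc_s _] /andP[cyc_t _] /allPn[v /mapP[p t_p ->]].
rewrite negbK => /mapP[q s_q pq].
have [u1 [perm_s cyc_u1]] := cycle_rot_to_last cyc_s s_q.
have [u2 [perm_t cyc_u2]] := cycle_rot_to_last cyc_t t_p.
exists (rcons u1 q ++ rcons u2 p); split; last exact: perm_cat.
by rewrite -rcons_cat closed_steps_rcons rcons_cat cycle_rcons_cat ?cyc_u1 ?cyc_u2.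
Qed.

Lemma insert_closed_steps D s : closed_steps s -> all closed_steps D ->
  pairwise anchors_disjoint D ->
  exists D', [/\ all closed_steps D', pairwise anchors_disjoint D' &
                 perm_eq (s ++ flatten D) (flatten D')].
Proof.
elim: D s => [|d D IHD] s closed_s; first by exists [:: s]; rewrite /= closed_s cats0.
case/andP=> closed_d closedD /andP[disj_d disjD].
have [ds | not_ds] := boolP (anchors_disjoint d s).
  have [D' [closedD' disjD' permD']] := IHD s closed_s closedD disjD.
  exists (d :: D'); split=> /=; first by rewrite closed_d.
    rewrite disjD' andbT -anchors_disjoint_flatten -(anchors_disjoint_perm d permD').
    by rewrite anchors_disjoint_cat ds anchors_disjoint_flatten.
  by rewrite perm_catCA perm_cat2l.
have [m [closed_m perm_m]] := merge_closed_steps closed_s closed_d not_ds.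
have [D' [closedD' disjD' permD']] := IHD m closed_m closedD disjD.
by exists D'; split; rewrite // catA (perm_trans _ permD') // perm_cat2r.
Qed.

Lemma closed_steps_merge_disjoint L : all closed_steps L ->
  exists D, [/\ all closed_steps D, pairwise anchors_disjoint D &
                perm_eq (flatten L) (flatten D)].
Proof.
elim: L => [|s L IHL] /=; first by exists [::].
case/andP=> closed_s /IHL[D0 [closedD0 disjD0 permD0]].
have [D [closedD disjD permD]] := insert_closed_steps closed_s closedD0 disjD0.
by exists D; split; rewrite // (perm_trans _ permD) // perm_cat2l.
Qed.

Lemma anchors_walk_of_steps_disjoint v0 s t : s != [::] -> t != [::] ->
  ~~ has (fun v => v \in anchors (walk_of_steps v0 t)) (anchors (walk_of_steps v0 s)) =
  anchors_disjoint s t.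
Proof.
move=> s_nil t_nil; rewrite -all_predC.
rewrite (eq_all_r (fun x => mem_anchors_walk_of_steps v0 x s_nil)).
by apply: eq_all => v; rewrite /= mem_anchors_walk_of_steps.
Qed.

Lemma pairwise_disjoint_walks_of_steps v0 D : all closed_steps D ->
  pairwise anchors_disjoint D ->
  pairwise (fun W1 W2 => ~~ has (fun v => v \in anchors W2) (anchors W1))
    (map (walk_of_steps v0) D).
Proof.
elim: D => [//|s D IHD] /= /andP[closed_s closedD] /andP[disj_s disjD].
rewrite IHD // andbT all_map; apply/allP => t tD /=.
have /andP[_ s_nil] := closed_s; have /andP[_ t_nil] := allP closedD t tD.
by rewrite anchors_walk_of_steps_disjoint // (allP disj_s).
Qed.

Lemma count_walks_of_steps v0 L e : all (fun t => uniq (map fst t)) L ->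
  count (fun W => e \in wedges W) (map (walk_of_steps v0) L) =
  count_mem e (map fst (flatten L)).
Proof.
elim: L => [//|t L IHL] /= /andP[uniq_t uniqL].
by rewrite map_cat count_cat -IHL // count_uniq_mem.
Qed.

(* Each edge of a covering family occurs exactly once among all steps, so any
   regrouping of the steps is again a covering family of strict trails. *)
Lemma covers_exactly_once_regroup v0 F C : all (is_closed inc) F ->
  all (fun W => uniq (wedges W)) F -> covers_exactly_once F ->
  perm_eq (flatten (map snd F)) (flatten C) ->
  covers_exactly_once (map (walk_of_steps v0) C) /\ all (fun t => uniq (map fst t)) C.
Proof.
move=> closedF uniqF coverF permFC.
have uniqL : all (fun t => uniq (map fst t)) (map snd F) by rewrite all_map.
have [defF _] := closed_walksE v0 closedF; rewrite defF in coverF.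
have countC e : count_mem e (map fst (flatten C)) = 1.
  by rewrite -(permP (perm_map fst permFC)) -(count_walks_of_steps v0) ?coverF.
have uniqC : all (fun t => uniq (map fst t)) C.
  have : uniq (map fst (flatten C)).
    apply: count_mem_uniq => e; rewrite countC.
    by case: (boolP (e \in _)) => // /count_memPn; rewrite countC.
  rewrite map_flatten; elim: C {permFC countC} => [//|t C IHC] /=.
  by rewrite cat_uniq => /and3P[-> _ /IHC].
by split=> // e; rewrite count_walks_of_steps.
Qed.

End StepSequences.

Theorem theorem2p41 (V E : finType) (inc : E -> {set V})
  (HV : 0 < #|V|) (HE : forall e : E, inc e != set0) :
  quasi_eulerian inc <-> exists F : seq (walk V E), cycle_decomposition inc F.
Proof.
(* [HV] only provides the junk start vertex of [walk_of_steps]. *)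
case/card_gt0P: HV => v0 _.
split=> [[F [trailsF coverF _]] | [F [cyclesF coverF]]].
- have closedF : all (is_closed inc) F by apply: sub_all trailsF => W /andP[].
  have uniqF : all (fun W => uniq (wedges W)) F by apply: sub_all trailsF => W /andP[].
  have [C [closedC uniqC permC]] := closed_steps_all_cycles (closed_walksE v0 closedF).2.
  have [coverC uniqEC] := covers_exactly_once_regroup v0 closedF uniqF coverF permC.
  exists (map (walk_of_steps v0) C); split=> //; rewrite all_map.
  apply/allP => t tC; rewrite /= is_cycle_walk_of_steps.
  by rewrite (allP closedC) ?(allP uniqC) ?(allP uniqEC).
- have closedF : all (is_closed inc) F by apply: sub_all cyclesF => W /and3P[].
  have uniqF : all (fun W => uniq (wedges W)) F by apply: sub_all cyclesF => W /and3P[].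
  have [D [closedD disjD permD]] := closed_steps_merge_disjoint (closed_walksE v0 closedF).2.
  have [coverD uniqED] := covers_exactly_once_regroup v0 closedF uniqF coverF permD.
  exists (map (walk_of_steps v0) D); split=> //.
    rewrite all_map; apply/allP => t tD; rewrite /= is_closed_strict_trail_walk_of_steps.
    by rewrite (allP closedD) ?(allP uniqED).
  exact: pairwise_disjoint_walks_of_steps closedD disjD.
Qed.
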